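(* Let $m\ge 1$ and let $(a_0,\dots,a_{m-1})$ be a finite sequence of non-negative integers with P-G triangle entries $d_k^{(j)}$. Let $B_j=d_{m-j}^{(j-1)}$ for $1\le j\le m$ be the entries of its eastern edge (so $B_1=a_{m-1}$ and $B_m=d_0^{(m-1)}$), and suppose $0\le B_1\le B_2\le\cdots\le B_m$. Then for every integer $Z\ge 0$ there exists an integer $C_1\ge B_1$ such that, in the P-G triangle generated by the extended sequence $(a_0,\dots,a_{m-1},C_1)$, the entries $C_j:=d_{m+1-j}^{(j-1)}$ ($1\le j\le m+1$) of its new eastern edge satisfy $C_j\ge B_j$ for $1\le j\le m$ and $C_{m+1}=Z$.
   Context: For a finite or infinite sequence $\mathfrak u=(a_0,a_1,\dots)$ of non-negative integers, the P-G triangle generated by $\mathfrak u$ consists of the numbers $d_k^{(j)}$ defined by $d_k^{(0)}=a_k$ and $d_k^{(j+1)}=|d_{k+1}^{(j)}-d_k^{(j)}|$ for $j,k\ge 0$ (for a finite sequence $(a_0,\dots,a_{N-1})$ these are defined for $0\le k\le N-1-j$). *)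

From mathcomp Require Import all_boot.

Definition absdiff (x y : nat) : nat := (x - y) + (y - x).

(* Only entries with k <= size a - 1 - j are meaningful (the statement only
   uses those). *)
Fixpoint pg (a : seq nat) (j k : nat) : nat :=
  match j with
  | 0 => nth 0 a k
  | j'.+1 => absdiff (pg a j' k.+1) (pg a j' k)
  end.

Definition east (a : seq nat) (j : nat) : nat := pg a j.-1 (size a - j).

From mathcomp Require Import all_boot.
From mathcomp Require Import zify.

(* Write B_1, ..., B_m for the eastern edge of the triangle of a
   and T_j := B_{j+1} + ... + B_m for its tail sums.  Append to a the value
   C_1 := Z + T_0.  Appending an entry does not change the old triangle, and
   the new eastern edge is computed one row at a time from the old one:
   C_{j+1} = |C_j - B_j|.  Since T_{j-1} = B_j + T_j, induction gives
   C_{j+1} = Z + T_j for every j <= m. *)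

Lemma absdiff_addK (x y : nat) : absdiff (x + y) y = x.
Proof. by rewrite /absdiff addnK (eqP (leq_addl x y)) addn0. Qed.

Lemma pg_rcons (a : seq nat) (c j k : nat) :
  k + j < size a -> pg (rcons a c) j k = pg a j k.
Proof.
elim: j k => [|j IH] k /= lt_kj.
  by rewrite nth_rcons -(addn0 k) lt_kj.
by rewrite !IH //; lia.
Qed.

Definition edge_tail (a : seq nat) (j : nat) : nat :=
  \sum_(j <= i < size a) east a i.+1.

Lemma edge_tail_recl (a : seq nat) (j : nat) :
  j < size a -> edge_tail a j = east a j.+1 + edge_tail a j.+1.
Proof. by move=> lt_j; rewrite /edge_tail big_ltn. Qed.

Lemma edge_tail_size (a : seq nat) : edge_tail a (size a) = 0.
Proof. by rewrite /edge_tail big_geq. Qed.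

Definition extension (a : seq nat) (Z : nat) : seq nat :=
  rcons a (Z + edge_tail a 0).

Lemma east_extension (a : seq nat) (Z j : nat) :
  j <= size a -> east (extension a Z) j.+1 = Z + edge_tail a j.
Proof.
rewrite /east /extension size_rcons subSS.
elim: j => [|j IH] lt_j; first by rewrite subn0 /= nth_rcons ltnn eqxx.
rewrite [pg _ j.+1 _]/= (subnSK lt_j) (IH (ltnW lt_j)) pg_rcons; last lia.
by rewrite (edge_tail_recl _ _ lt_j) addnCA addnC absdiff_addK.
Qed.

Lemma east_le_extension (a : seq nat) (Z j : nat) :
  j < size a -> east a j.+1 <= east (extension a Z) j.+1.
Proof.
move=> lt_j; rewrite (east_extension a Z j (ltnW lt_j)) (edge_tail_recl _ _ lt_j).
by rewrite addnCA leq_addr.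
Qed.

Theorem proposition3p3 (a : seq nat) :
  1 <= size a ->
  (forall j, 1 <= j -> j < size a -> east a j <= east a j.+1) ->
  forall Z : nat, exists C1 : nat,
    east a 1 <= C1 /\
    (forall j, 1 <= j <= size a -> east a j <= east (rcons a C1) j) /\
    east (rcons a C1) (size a).+1 = Z.
Proof.
move=> size_gt0 _ Z.
have C1_first : east (extension a Z) 1 = Z + edge_tail a 0.
  exact: east_extension.
exists (Z + edge_tail a 0); split; last split.
- by rewrite -C1_first; apply: east_le_extension.
- by case=> [|j] // /andP[_ lt_j]; apply: east_le_extension.
- by rewrite (east_extension a Z _ (leqnn _)) edge_tail_size addn0.
Qed.
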